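(* Let $\mathbb{G}=(\mathcal{V},\mathcal{E})$ be a connected undirected graph on $\mathcal{V}=\{1,\dots,m\}$ with $\bar m$ edges and neighbor sets $\mathcal{N}_i$ ($i\notin\mathcal{N}_i$). For each edge $(i,j)$, in either order, let $A_{ij}\in\mathbb{R}^{d_{ij}\times n}$ have full row rank and $\boldsymbol{b}_{ij}\in\mathbb{R}^{d_{ij}}$, with $A_{ij}=A_{ji}$ and $\boldsymbol{b}_{ij}=-\boldsymbol{b}_{ji}$. Assume there exist $\boldsymbol{x}_1,\dots,\boldsymbol{x}_m\in\mathbb{R}^n$ satisfying the edge agreements $A_{ij}(\boldsymbol{x}_i-\boldsymbol{x}_j)=\boldsymbol{b}_{ij}$ for all $(i,j)\in\mathcal{E}$, and that $\ker\bar H'\cap\operatorname{image}\bar P=\{\boldsymbol{0}\}$. Consider the continuous-time update $$\dot{\boldsymbol{x}}_i(t)=-\sum_{j\in\mathcal{N}_i}P_{ij}\big(\boldsymbol{x}_i(t)-\boldsymbol{x}_j(t)-\bar{\boldsymbol{b}}_{ij}\big),\qquad i\in\mathcal{V}.$$ Then each $\boldsymbol{x}_i(t)$ converges exponentially fast to a constant vector $\boldsymbol{x}_i^*$, and $\boldsymbol{x}_1^*,\dots,\boldsymbol{x}_m^*$ satisfy $A_{ij}(\boldsymbol{x}_i^*-\boldsymbol{x}_j^* )=\boldsymbol{b}_{ij}$ for all $(i,j)\in\mathcal{E}$.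
   Context: $'$ denotes transpose. $P_{ij}=A_{ij}'(A_{ij}A_{ij}')^{-1}A_{ij}$, $\bar{\boldsymbol{b}}_{ij}=A_{ij}'(A_{ij}A_{ij}')^{-1}\boldsymbol{b}_{ij}$. With a fixed enumeration/orientation of edges $(i_1,j_1),\dots,(i_{\bar m},j_{\bar m})$: $\bar P=\mathrm{diag}\{P_{i_1j_1},\dots,P_{i_{\bar m}j_{\bar m}}\}\in\mathbb{R}^{\bar mn\times\bar mn}$ (block diagonal), $H\in\mathbb{R}^{\bar m\times m}$ the oriented incidence matrix whose $l$-th row has $1$ in column $i_l$, $-1$ in column $j_l$, $0$ elsewhere, and $\bar H=H\otimes I_n$. *)

From HB Require Import structures.
From mathcomp Require Import all_boot all_order all_algebra.
From mathcomp Require Import mxtens.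
From mathcomp Require Import all_classical all_reals all_analysis.

Set Implicit Arguments.
Unset Strict Implicit.
Unset Printing Implicit Defensive.

Import Order.TTheory GRing.Theory Num.Theory.
Local Open Scope ring_scope.

(* Graph on vertices 'I_m given by a fixed enumeration of its mbar edges,
   edge l being oriented as (ei l, ej l). *)
Section Defs.
Variables (R : realType) (m mbar n : nat).
Variables (ei ej : 'I_mbar -> 'I_m).

Definition simple_edges : Prop :=
  (forall l, ei l != ej l) /\
  (forall l l', ((ei l == ei l') && (ej l == ej l')) ||
                ((ei l == ej l') && (ej l == ei l')) -> l = l').

Definition adj : rel 'I_m :=
  fun i j => [exists l, ((ei l == i) && (ej l == j)) || ((ei l == j) && (ej l == i))].

Definition connected_graph : Prop := forall i j, connect adj i j.

Definition incidence : 'M[R]_(mbar, m) :=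
  \matrix_(l, i) ((ei l == i)%:R - (ej l == i)%:R).
Definition Hbar : 'M[R]_(mbar * n, m * n) := tensmx incidence (1%:M : 'M[R]_n).

Variable d : 'I_mbar -> nat.
Variable A : forall l, 'M[R]_(d l, n).
Variable b : forall l, 'cV[R]_(d l).

Definition Pe (l : 'I_mbar) : 'M[R]_n :=
  (A l)^T *m invmx (A l *m (A l)^T) *m A l.
Definition bbare (l : 'I_mbar) : 'cV[R]_n :=
  (A l)^T *m invmx (A l *m (A l)^T) *m b l.

(* Pbar = diag{P_1,...,P_mbar} *)
Definition Pbar : 'M[R]_(mbar * n, mbar * n) :=
  \sum_(l < mbar) tensmx (delta_mx l l : 'M[R]_mbar) (Pe l).

(* For an ordered pair (i,j) of neighbours: A_ij = A_ji = A_l and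
   b_ij = b_l, b_ji = - b_l where l is the edge {i,j} oriented (i,j).
   Hence P_ij = P_ji = P_l, bbar_ij = bbar_l, bbar_ji = - bbar_l.
   (For a simple graph exactly one l contributes to each sum below.) *)
Definition Pij (i j : 'I_m) : 'M[R]_n :=
  \sum_(l < mbar | ((ei l == i) && (ej l == j)) || ((ei l == j) && (ej l == i))) Pe l.
Definition bbarij (i j : 'I_m) : 'cV[R]_n :=
  \sum_(l < mbar | (ei l == i) && (ej l == j)) bbare l
  - \sum_(l < mbar | (ei l == j) && (ej l == i)) bbare l.

Definition flow (x : 'I_m -> 'cV[R]_n) (i : 'I_m) : 'cV[R]_n :=
  - \sum_(j < m | adj i j) Pij i j *m (x i - x j - bbarij i j).

End Defs.

(* Stack the x_i into one vector and put G := Pbar Hbar.  If x0 satisfies the edge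
   agreements then P_ij (x0_i - x0_j) = bbar_ij, so the update is the gradient flow
   z' = - G^T G z of the error z := x - x0.  Along it f := G^T G z obeys
   (|f|^2)' = -2 |G f|^2, and on the range of G^T G one has |f|^2 <= k |G f|^2, so
   |f| = |z'| decays like exp (- t / k).  Hence z converges exponentially to some u,
   and G u = 0, i.e. P_ij (u_i - u_j) = 0 on every edge; since A_ij P_ij = A_ij this
   gives A_ij (u_i - u_j) = 0, so x0 + u satisfies the agreements. *)

From HB Require Import structures.
From mathcomp Require Import all_boot all_order all_algebra.
From mathcomp Require Import mxtens ring lra.
From mathcomp Require Import all_classical all_reals all_analysis.
Import Order.TTheory GRing.Theory Num.Theory.
Import numFieldNormedType.Exports.
Local Open Scope classical_set_scope.
Local Open Scope ring_scope.
Set Implicit Arguments. Unset Strict Implicit. Unset Printing Implicit Defensive.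

Section RealFunctions.
Variable R : realType.
Implicit Types (f g : R -> R) (c t : R).

Lemma is_derive_expRM c t : is_derive t 1 (fun s => expR (c * s)) (expR (c * t) * c).
Proof.
have -> : (fun s => expR (c * s)) = expR \o ( *%R c) by [].
apply: is_derive1_comp.
have := is_deriveZ c (@is_derive_id _ _ t 1).
by rewrite /GRing.scale /= mulr1.
Qed.

Lemma continuous_expRM c : continuous (fun s : R => expR (c * s)).
Proof.
move=> s; apply: continuous_comp; last exact: continuous_expR.
by apply: continuousM; [exact: cst_continuous | exact: id].
Qed.

Lemma within_continuousD (A : set R) f g :
  {within A, continuous f} -> {within A, continuous g} ->
  {within A, continuous (f \+ g)}.
Proof. move=> hf hg x; exact: (@continuousD _ _ (subspace A) f g x (hf x) (hg x)). Qed.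

Lemma within_continuousM (A : set R) f g :
  {within A, continuous f} -> {within A, continuous g} ->
  {within A, continuous (f \* g)}.
Proof. move=> hf hg x; exact: (@continuousM _ (subspace A) f g x (hf x) (hg x)). Qed.

Lemma within_continuous_sum (A : set R) n (h : 'I_n -> R -> R) :
  (forall i, {within A, continuous (h i)}) ->
  {within A, continuous (fun s => \sum_i h i s)}.
Proof.
move=> hc; have -> : (fun s => \sum_i h i s) = \sum_i h i by rewrite fct_sumE.
apply: (big_ind (fun F => {within A, continuous F})) => //.
- by move=> x; apply: cst_continuous.
- exact: within_continuousD.
Qed.

Local Notation cont_ge0 f := {within `[0, +oo[, continuous f}.

Lemma nonincreasing_of_derive f (df : R -> R) :
  (forall t, 0 < t -> is_derive t 1 f (df t)) -> (forall t, 0 < t -> df t <= 0) ->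
  cont_ge0 f -> forall s t, 0 <= s -> s <= t -> f t <= f s.
Proof.
move=> fdf df_le0; apply: ler0_derive1_nincry => t; rewrite in_itv /= andbT => t_gt0.
  by case: (fdf t t_gt0).
by rewrite derive1E; case: (fdf t t_gt0) => _ ->; apply: df_le0.
Qed.

Lemma le_expR_of_derive f (df : R -> R) c :
  (forall t, 0 < t -> is_derive t 1 f (df t)) -> (forall t, 0 < t -> df t <= - c * f t) ->
  cont_ge0 f -> forall t, 0 <= t -> f t <= f 0 * expR (- (c * t)).
Proof.
move=> fdf df_le fc t t_ge0; pose g s := expR (c * s) * f s.
have : g t <= g 0.
  apply: (nonincreasing_of_derive (df := fun s => expR (c * s) * (df s + c * f s))) => //.
  - move=> s s_gt0; apply: is_derive_eq (is_deriveM (is_derive_expRM c s) (fdf s s_gt0)) _.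
    by rewrite /GRing.scale /=; ring.
  - move=> s s_gt0; rewrite pmulr_rle0 ?expR_gt0 //.
    by have := df_le s s_gt0; rewrite mulNr; lra.
  - exact/within_continuousM/fc/continuous_subspaceT/continuous_expRM.
rewrite /g mulr0 expR0 mul1r => le_g.
by rewrite expRN ler_pdivlMr ?expR_gt0 // mulrC.
Qed.

Lemma exists_between_monotone (lo hi : R -> R) :
  (forall s t, 0 <= s -> s <= t -> lo s <= lo t) ->
  (forall s t, 0 <= s -> s <= t -> hi t <= hi s) ->
  (forall t, 0 <= t -> lo t <= hi t) ->
  exists l, forall t, 0 <= t -> lo t <= l <= hi t.
Proof.
move=> lo_nd hi_ni lo_hi.
have lo_le_hi s t : 0 <= s -> 0 <= t -> lo s <= hi t.
  move=> s_ge0 t_ge0; have [st|/ltW ts] := leP s t.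
    exact: le_trans (lo_nd s t s_ge0 st) (lo_hi t t_ge0).
  exact: le_trans (lo_hi s s_ge0) (hi_ni t s t_ge0 ts).
pose S := [set lo s | s in `[0, +oo[].
have S0 : S !=set0 by exists (lo 0), 0; rewrite //= in_itv /= lexx.
have S_ub t : 0 <= t -> ubound S (hi t).
  by move=> t_ge0 y [s]; rewrite /= in_itv /= andbT => s_ge0 <-; exact: lo_le_hi.
exists (sup S) => t t_ge0; apply/andP; split; last exact: ge_sup (S_ub t t_ge0).
apply: sup_upper_bound; last by exists t; rewrite //= in_itv /= t_ge0.
by split=> //; exists (hi 0); apply: S_ub.
Qed.

(* With e t := C / lam * exp (- lam t), f + e is nonincreasing and f - e nondecreasing,
   and the limit is squeezed between them. *)
Lemma cvg_of_derive_le_expR f (df : R -> R) C lam : 0 < lam ->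
  (forall t, 0 < t -> is_derive t 1 f (df t)) ->
  (forall t, 0 < t -> `|df t| <= C * expR (- (lam * t))) -> cont_ge0 f ->
  exists l, forall t, 0 <= t -> `|f t - l| <= C / lam * expR (- (lam * t)).
Proof.
move=> lam_gt0 fdf df_le fc; set D := C / lam.
have Dlam : D * lam = C by rewrite /D divfK ?gt_eqF.
pose e s := D * expR (- lam * s).
have de (s : R) : is_derive s 1 e (- (C * expR (- (lam * s)))).
  apply: is_derive_eq (is_deriveM (is_derive_cst D s 1) (is_derive_expRM (- lam) s)) _.
  by rewrite /GRing.scale /= -Dlam mulNr; ring.
have ec : cont_ge0 e.
  apply: within_continuousM; apply: continuous_subspaceT.
    exact: cst_continuous.
  exact: continuous_expRM.
have e_ge0 (s : R) : 0 <= e s.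
  have := le_trans (normr_ge0 _) (df_le 1 ltr01); rewrite pmulr_lge0 ?expR_gt0 // => C_ge0.
  by rewrite /e mulr_ge0 ?expR_ge0 // divr_ge0 // ltW.
have upper_ni : forall s t, 0 <= s -> s <= t -> f t + e t <= f s + e s.
  apply: (nonincreasing_of_derive (df := fun s => df s - C * expR (- (lam * s)))).
  - by move=> s s_gt0; apply: is_deriveD (fdf s s_gt0) (de s).
  - by move=> s /df_le; rewrite ler_norml subr_le0 => /andP[].
  - exact: within_continuousD.
have lower_ni : forall s t, 0 <= s -> s <= t -> e t - f t <= e s - f s.
  apply: (nonincreasing_of_derive (df := fun s => - (C * expR (- (lam * s))) - df s)).
  - by move=> s s_gt0; apply: is_deriveB (de s) (fdf s s_gt0).
  - by move=> s /df_le; rewrite ler_norml => /andP[]; lra.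
  - apply: within_continuousD => // x.
    exact: (@continuousN _ _ (subspace _) f x (fc x)).
have [l fl] : exists l, forall t, 0 <= t -> f t - e t <= l <= f t + e t.
  apply: exists_between_monotone upper_ni _ => [s t s_ge0 st|t _].
  - by have := lower_ni s t s_ge0 st; lra.
  - by have := e_ge0 t; lra.
exists l => t /fl /andP[lo hi].
by rewrite /e mulNr in lo hi; rewrite ler_norml; apply/andP; split; lra.
Qed.

(* For y <> 0, |y| (1 + lam t) <= |y| exp (lam t) <= M fails at t := M / (|y| lam). *)
Lemma eq0_of_le_expR (y M lam : R) : 0 < lam ->
  (forall t, 0 <= t -> `|y| <= M * expR (- (lam * t))) -> y = 0.
Proof.
move=> lam_gt0 y_le; apply/eqP/negPn/negP => /negbTE y_neq0.
have y_gt0 : 0 < `|y| by rewrite normr_gt0 y_neq0.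
have M_ge_y : `|y| <= M by have := y_le 0 (lexx 0); rewrite mulr0 oppr0 expR0 mulr1.
pose t := M / (`|y| * lam).
have t_ge0 : 0 <= t by rewrite divr_ge0 ?mulr_ge0 ?ltW // (lt_le_trans y_gt0).
have := y_le t t_ge0; rewrite expRN ler_pdivlMr ?expR_gt0 // => yexp_le.
have := ler_wpM2l (ltW y_gt0) (expR_ge1Dx (lam * t)).
have -> : `|y| * (1 + lam * t) = `|y| + M by rewrite /t; field; rewrite !gt_eqF.
lra.
Qed.

End RealFunctions.

Section DotProduct.
Variable R : realFieldType.
Implicit Types N p : nat.

Definition dot N (u v : 'cV[R]_N) : R := \sum_a u a 0 * v a 0.

Lemma dotE N (u v : 'cV[R]_N) : dot u v = (u^T *m v) 0 0.
Proof. by rewrite mxE; apply: eq_bigr => a _; rewrite mxE. Qed.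

Lemma dot_mulmxr N p (M : 'M[R]_(N, p)) u v : dot u (M *m v) = dot (M^T *m u) v.
Proof. by rewrite !dotE trmx_mul trmxK mulmxA. Qed.

Lemma dotNr N (u v : 'cV[R]_N) : dot u (- v) = - dot u v.
Proof. by rewrite /dot -sumrN; apply: eq_bigr => a _; rewrite mxE mulrN. Qed.

Lemma dot_ge0 N (u : 'cV[R]_N) : 0 <= dot u u.
Proof. by apply: sumr_ge0 => a _; rewrite -expr2 sqr_ge0. Qed.

Lemma coord_sqr_le_dot N (u : 'cV[R]_N) a : u a 0 ^+ 2 <= dot u u.
Proof.
rewrite /dot (bigD1 a) //= -expr2 lerDl.
by apply: sumr_ge0 => b _; rewrite -expr2 sqr_ge0.
Qed.

Lemma dot_eq0 N (u : 'cV[R]_N) : dot u u = 0 -> u = 0.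
Proof.
move=> u0; apply/colP => a; rewrite mxE; apply/eqP; rewrite -sqrf_eq0 eq_le sqr_ge0 andbT.
by rewrite -u0 coord_sqr_le_dot.
Qed.

Lemma dot_sqrD N (u v : 'cV[R]_N) a b :
  dot (a *: u + b *: v) (a *: u + b *: v) =
  a ^+ 2 * dot u u + 2 * a * b * dot u v + b ^+ 2 * dot v v.
Proof.
rewrite /dot !mulr_sumr -!big_split /=; apply: eq_bigr => c _.
by rewrite !mxE; ring.
Qed.

Lemma dot_young N (u v : 'cV[R]_N) : 2 * dot u v <= dot u u + dot v v.
Proof. by have := dot_ge0 (1 *: u + (-1) *: v); rewrite dot_sqrD; lra. Qed.

Lemma dot_CauchySchwarz N (u v : 'cV[R]_N) : dot u v ^+ 2 <= dot u u * dot v v.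
Proof.
have [/dot_eq0 ->|vv_neq0] := eqVneq (dot v v) 0.
  by rewrite !dotE !mulmx0 mxE expr0n mulr0.
have vv_gt0 : 0 < dot v v by rewrite lt_def vv_neq0 dot_ge0.
have := dot_ge0 (dot v v *: u + (- dot u v) *: v); rewrite dot_sqrD.
have -> : dot v v ^+ 2 * dot u u + 2 * dot v v * - dot u v * dot u v
          + (- dot u v) ^+ 2 * dot v v
          = dot v v * (dot u u * dot v v - dot u v ^+ 2) by ring.
by rewrite pmulr_rge0 // subr_ge0.
Qed.

Lemma dot_mulmx_le N p (M : 'M[R]_(p, N)) v :
  dot (M *m v) (M *m v) <= (\sum_c \sum_a M c a ^+ 2) * dot v v.
Proof.
rewrite mulr_suml; apply: ler_sum => c _.
have -> : \sum_a M c a ^+ 2 = dot (row c M)^T (row c M)^T.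
  by apply: eq_bigr => a _; rewrite !mxE expr2.
have -> : (M *m v) c 0 = dot (row c M)^T v.
  by rewrite mxE; apply: eq_bigr => a _; rewrite !mxE.
by rewrite -expr2 dot_CauchySchwarz.
Qed.

End DotProduct.

Section Gram.
Variables (R : realFieldType) (p N : nat) (G : 'M[R]_(p, N)).
Local Notation gram := (G^T *m G).

Lemma dot_gram u v : dot u (gram *m v) = dot (G *m u) (G *m v).
Proof. by rewrite -mulmxA dot_mulmxr trmxK. Qed.

(* With w := (pinvmx gram)^T f a preimage of f under gram of controlled size,
   |f|^4 = (G f . G w)^2 <= |G f|^2 (w . f) and w . f <= (K + 1) |f|^2. *)
Lemma range_gram_coercive : exists2 k : R, 0 < k &
  forall e, dot (gram *m e) (gram *m e) <= k * dot (G *m (gram *m e)) (G *m (gram *m e)).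
Proof.
pose W := (pinvmx gram)^T; pose K := \sum_c \sum_a W c a ^+ 2.
have K_ge0 : 0 <= K by do 2![apply: sumr_ge0 => ? _]; apply: sqr_ge0.
exists (K + 1) => [|e]; first by rewrite ltr_wpDl.
set f := gram *m e; pose w := W *m f.
have gram_sym : gram^T = gram by rewrite trmx_mul trmxK.
have gram_w : gram *m w = f.
  apply: trmx_inj; rewrite trmx_mul gram_sym /w trmx_mul trmxK.
  by rewrite mulmxKpV // /f trmx_mul gram_sym submxMl.
have ff_eq : dot f f = dot (G *m f) (G *m w) by rewrite -dot_gram gram_w.
have ww_le : dot (G *m w) (G *m w) <= (K + 1) * dot f f.
  rewrite -dot_gram gram_w; have := dot_young w f; have := dot_mulmx_le W f.
  rewrite -/w -/K; have := dot_ge0 f; have := dot_ge0 w; nra.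
have CS := dot_CauchySchwarz (G *m f) (G *m w); rewrite -ff_eq in CS.
have [ff0|ff_neq0] := eqVneq (dot f f) 0.
  by rewrite ff0 mulr_ge0 ?dot_ge0 // addr_ge0.
have ff_gt0 : 0 < dot f f by rewrite lt_def ff_neq0 dot_ge0.
rewrite -(ler_pM2r ff_gt0) -expr2; apply: le_trans CS _.
by rewrite [leRHS]mulrAC [leRHS]mulrC ler_wpM2l ?dot_ge0.
Qed.

End Gram.

Section CoordinateCalculus.
Variable R : realType.
Implicit Types (N p : nat) (t : R).

Definition coord_derive N t (z : R -> 'cV[R]_N) (dz : 'cV[R]_N) :=
  forall a, is_derive t 1 (fun s => z s a 0) (dz a 0).

Definition coord_continuous N (A : set R) (z : R -> 'cV[R]_N) :=
  forall a, {within A, continuous (fun s => z s a 0)}.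

Lemma coord_derive_mulmx N p (M : 'M[R]_(p, N)) t z dz :
  coord_derive t z dz -> coord_derive t (fun s => M *m z s) (M *m dz).
Proof.
move=> zd c; have -> : (fun s => (M *m z s) c 0) = \sum_a (fun s => M c a * z s a 0).
  by rewrite fct_sumE; apply/funext => s; rewrite mxE.
by rewrite mxE; apply: is_derive_sum => a; apply: is_deriveZ.
Qed.

Lemma coord_continuous_mulmx N p (M : 'M[R]_(p, N)) A z :
  coord_continuous A z -> coord_continuous A (fun s => M *m z s).
Proof.
move=> zc c; under eq_fun do rewrite mxE.
apply: within_continuous_sum => a; apply: within_continuousM (zc a) => x.
exact/continuous_subspaceT/cst_continuous.
Qed.

Lemma is_derive_dot N t (z : R -> 'cV[R]_N) dz :
  coord_derive t z dz -> is_derive t 1 (fun s => dot (z s) (z s)) (2 * dot (z t) dz).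
Proof.
move=> zd; have -> : (fun s => dot (z s) (z s)) = \sum_a (fun s => z s a 0 * z s a 0).
  by rewrite fct_sumE.
apply: is_derive_eq (is_derive_sum (fun a => is_deriveM (zd a) (zd a))) _.
by rewrite /dot mulr_sumr; apply: eq_bigr => a _; rewrite /GRing.scale /=; ring.
Qed.

Lemma continuous_dot N A (z : R -> 'cV[R]_N) :
  coord_continuous A z -> {within A, continuous (fun s => dot (z s) (z s))}.
Proof. by move=> zc; apply: within_continuous_sum => a; apply: within_continuousM. Qed.

End CoordinateCalculus.

Lemma mulmx_eq0_of_expR_bounds (R : realType) N p (M : 'M[R]_(p, N))
    (z : R -> 'cV[R]_N) (u : 'cV[R]_N) c c' lam : 0 < lam ->
  (forall t, 0 <= t -> forall a, `|z t a 0 - u a 0| <= c * expR (- (lam * t))) ->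
  (forall t, 0 <= t -> forall b, `|(M *m z t) b 0| <= c' * expR (- (lam * t))) ->
  M *m u = 0.
Proof.
move=> lam_gt0 zu Mz; apply/colP => b; rewrite [RHS]mxE.
apply: (eq0_of_le_expR (M := c' + \sum_a `|M b a| * c) lam_gt0) => t t_ge0.
have -> : (M *m u) b 0 = (M *m z t) b 0 + \sum_a M b a * (u a 0 - z t a 0).
  by rewrite !mxE -big_split; apply: eq_bigr => a _ /=; ring.
rewrite mulrDl mulr_suml; apply: le_trans (ler_normD _ _) _; apply: lerD; first exact: Mz.
apply: le_trans (ler_norm_sum _ _ _) _; apply: ler_sum => a _.
by rewrite normrM -mulrA ler_wpM2l // distrC zu.
Qed.

Section GradientFlow.
Variables (R : realType) (p N : nat) (G : 'M[R]_(p, N)).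
Local Notation gram := (G^T *m G).
Variable z : R -> 'cV[R]_N.
Hypothesis z_cont : coord_continuous `[0, +oo[ z.
Hypothesis z_derive : forall t, 0 < t -> coord_derive t z (- (gram *m z t)).

Lemma gradient_flow_velocity_decay : exists c lam : R, 0 < lam /\
  forall t, 0 <= t -> forall a, `|(gram *m z t) a 0| <= c * expR (- (lam * t)).
Proof.
have [k k_gt0 coercive] := range_gram_coercive G.
pose f s := gram *m z s; pose V s := dot (f s) (f s).
have f_derive t : 0 < t -> coord_derive t f (- (gram *m f t)).
  by move=> /z_derive /(coord_derive_mulmx gram); rewrite mulmxN.
have V_decay t : 0 <= t -> V t <= V 0 * expR (- (2 / k * t)).
  apply: (le_expR_of_derive (df := fun t => 2 * dot (f t) (- (gram *m f t)))).
  - by move=> s /f_derive /is_derive_dot.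
  - move=> s _; rewrite dotNr dot_gram mulNr mulrN lerN2 -mulrA ler_wpM2l //.
    by rewrite ler_pdivrMl // coercive.
  - exact/continuous_dot/coord_continuous_mulmx.
exists (Num.sqrt (V 0)), (k^-1); split=> [|t t_ge0 a]; first by rewrite invr_gt0.
have exp_sqr : expR (- (2 / k * t)) = expR (- (k^-1 * t)) ^+ 2.
  by rewrite -expRM_natr; congr expR; ring.
rewrite -sqrtr_sqr -[expR _]ger0_norm ?expR_ge0 // -sqrtr_sqr -sqrtrM ?dot_ge0 //.
apply: ler_wsqrtr; apply: le_trans (coord_sqr_le_dot _ _) _.
by rewrite -exp_sqr; apply: V_decay.
Qed.

Theorem gradient_flow_cvg : exists2 u : 'cV[R]_N,
    (exists c lam : R, 0 < lam /\
       forall t, 0 <= t -> forall a, `|z t a 0 - u a 0| <= c * expR (- (lam * t)))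
    & G *m u = 0.
Proof.
have [c [lam [lam_gt0 v_decay]]] := gradient_flow_velocity_decay.
have coord_cvg a : exists l, forall t, 0 <= t ->
    `|z t a 0 - l| <= c / lam * expR (- (lam * t)).
  apply: (cvg_of_derive_le_expR (f := fun s => z s a 0)
    (df := fun t => - (gram *m z t) a 0) lam_gt0) => //.
  - by move=> t /z_derive /(_ a); rewrite mxE.
  - by move=> t /ltW t_ge0; rewrite normrN v_decay.
have [l zl] := fin_all_exists coord_cvg.
exists (\col_a l a); first by exists (c / lam), lam; split=> // t t_ge0 a; rewrite mxE zl.
have gram_u : gram *m \col_a l a = 0.
  by apply: (mulmx_eq0_of_expR_bounds lam_gt0 _ v_decay) => t t_ge0 a; rewrite mxE; apply: zl.
by apply: dot_eq0; rewrite -dot_gram gram_u dotE mulmx0 mxE.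
Qed.

End GradientFlow.

Lemma sum_eq_scale (R : pzRingType) (V : lmodType R) (I : finType) (i0 : I) (X : I -> V) :
  \sum_i (i0 == i)%:R *: X i = X i0.
Proof.
rewrite (bigD1 i0) //= eqxx scale1r big1 ?addr0 // => i /negbTE.
by rewrite eq_sym => ->; rewrite scale0r.
Qed.

Section Stacking.
Variable R : pzRingType.
Implicit Types p q n : nat.

Lemma big_mxtens (V : nmodType) p n (F : 'I_(p * n) -> V) :
  \sum_a F a = \sum_i \sum_k F (mxtens_index (i, k)).
Proof.
rewrite pair_big; apply: reindex => /=.
exists (@mxtens_unindex p n) => a _; first by case: a => i k; rewrite mxtens_indexK.
by rewrite -surjective_pairing mxtens_unindexK.
Qed.

(* The column (y_1; ...; y_p), indexed as in the Kronecker products tensmx. *)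
Definition stack p n (y : 'I_p -> 'cV[R]_n) : 'cV[R]_(p * n) :=
  \col_a y (mxtens_unindex a).1 (mxtens_unindex a).2 0.

Definition unstack p n (v : 'cV[R]_(p * n)) (i : 'I_p) : 'cV[R]_n :=
  \col_k v (mxtens_index (i, k)) 0.

Lemma stackE p n (y : 'I_p -> 'cV[R]_n) i k : stack y (mxtens_index (i, k)) 0 = y i k 0.
Proof. by rewrite mxE mxtens_indexK. Qed.

Lemma unstackK p n : cancel (@unstack p n) (@stack p n).
Proof.
by move=> v; apply/colP => a; case: (mxtens_indexP a) => i k; rewrite stackE mxE.
Qed.

Lemma stackK p n : cancel (@stack p n) (@unstack p n).
Proof. by move=> y; apply/funext => i; apply/colP => k; rewrite mxE stackE. Qed.

Lemma stackB p n (y y' : 'I_p -> 'cV[R]_n) :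
  stack (fun i => y i - y' i) = stack y - stack y'.
Proof. by apply/colP => a; rewrite !mxE. Qed.

Lemma stackN p n (y : 'I_p -> 'cV[R]_n) : stack (fun i => - y i) = - stack y.
Proof. by apply/colP => a; rewrite !mxE. Qed.

Lemma stack_sum p n r (F : 'I_r -> 'I_p -> 'cV[R]_n) :
  stack (fun i => \sum_l F l i) = \sum_l stack (F l).
Proof. by apply/colP => a; rewrite !(mxE, summxE); apply: eq_bigr => l _; rewrite mxE. Qed.

Lemma tensmx_mul_stack p q n n' (M : 'M[R]_(q, p)) (B : 'M[R]_(n', n))
    (y : 'I_p -> 'cV[R]_n) :
  (M *t B) *m stack y = stack (fun i => \sum_j M i j *: (B *m y j)).
Proof.
apply/colP => a; case: (mxtens_indexP a) => i k.
rewrite stackE mxE big_mxtens summxE; apply: eq_bigr => j _.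
rewrite !mxE mulr_sumr; apply: eq_bigr => k' _.
by rewrite tensmxE stackE mulrA.
Qed.

Lemma block_diag_mul_stack p n (B : 'I_p -> 'M[R]_n) (w : 'I_p -> 'cV[R]_n) :
  (\sum_l delta_mx l l *t B l) *m stack w = stack (fun l => B l *m w l).
Proof.
rewrite mulmx_suml; under eq_bigr => l _ do rewrite tensmx_mul_stack.
rewrite -stack_sum; congr stack; apply/funext => i.
have delta_sum l : \sum_j delta_mx l l i j *: (B l *m w j) = (i == l)%:R *: (B l *m w l).
  rewrite (bigD1 l) //= big1 ?addr0 => [|j /negbTE j_neq]; first by rewrite mxE eqxx andbT.
  by rewrite mxE j_neq andbF scale0r.
by under eq_bigr do rewrite delta_sum; apply: sum_eq_scale.
Qed.

End Stacking.

Section StackedTrajectories.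
Variables (R : realType) (p n : nat) (x : R -> 'I_p -> 'cV[R]_n) (c : 'cV[R]_(p * n)).

Lemma coord_continuous_stack (A : set R) :
  (forall i k, {within A, continuous (fun s => x s i k 0)}) ->
  coord_continuous A (fun s => stack (x s) - c).
Proof.
move=> x_cont a; case: (mxtens_indexP a) => i k.
under eq_fun do rewrite !mxE mxtens_indexK.
by apply: within_continuousD (x_cont i k) _ => y; exact/continuous_subspaceT/cst_continuous.
Qed.

Lemma coord_derive_stack (t : R) (dx : 'I_p -> 'cV[R]_n) :
  (forall i k, is_derive t 1 (fun s => x s i k 0) (dx i k 0)) ->
  coord_derive t (fun s => stack (x s) - c) (stack dx).
Proof.
move=> x_derive a; case: (mxtens_indexP a) => i k.
under eq_fun do rewrite !mxE mxtens_indexK.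
by rewrite stackE -[dx i k 0]subr0; apply: is_deriveB.
Qed.

End StackedTrajectories.

Lemma row_free_mul_tr_unit (R : realFieldType) p n (B : 'M[R]_(p, n)) :
  row_free B -> B *m B^T \in unitmx.
Proof.
move=> B_free; rewrite -row_free_unit; apply/inj_row_free => v vBB0.
apply: (row_free_inj B_free); rewrite mul0mx; apply: trmx_inj; rewrite trmx0.
apply: dot_eq0; rewrite dotE (trmxK (v *m B)) trmx_mul mulmxA -(mulmxA v) vBB0.
by rewrite mul0mx mxE.
Qed.

Section EdgeProjections.
Variables (R : realType) (mbar n : nat) (d : 'I_mbar -> nat).
Variables (A : forall l, 'M[R]_(d l, n)) (b : forall l, 'cV[R]_(d l)).
Hypothesis A_free : forall l, row_free (A l).
Local Notation P := (Pe A).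

Lemma Pe_tr l : (P l)^T = P l.
Proof. by rewrite /Pe !trmx_mul trmxK trmx_inv trmx_mul trmxK mulmxA. Qed.

Lemma mulmx_Pe l : A l *m P l = A l.
Proof. by rewrite /Pe !mulmxA mulmxV ?row_free_mul_tr_unit // mul1mx. Qed.

Lemma Pe_idem l : P l *m P l = P l.
Proof. by rewrite {1}/Pe -!mulmxA mulmx_Pe mulmxA. Qed.

Lemma Pe_agreement l v : A l *m v = b l -> P l *m v = bbare A b l.
Proof. by move=> Av; rewrite /Pe -mulmxA Av. Qed.

Lemma Pbar_tr : (Pbar A)^T = Pbar A.
Proof.
rewrite /Pbar raddf_sum.
by apply: eq_bigr => l _; rewrite /= trmx_tens trmx_delta Pe_tr.
Qed.

Lemma Pbar_mul_stack (w : 'I_mbar -> 'cV[R]_n) :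
  Pbar A *m stack w = stack (fun l => P l *m w l).
Proof. exact: block_diag_mul_stack. Qed.

End EdgeProjections.

Section Incidence.
Variables (R : realType) (m mbar n : nat) (ei ej : 'I_mbar -> 'I_m).
Local Notation H := (incidence R ei ej).

Lemma incidenceE l i : H l i = (ei l == i)%:R - (ej l == i)%:R.
Proof. by rewrite mxE. Qed.

Lemma Hbar_mul_stack (y : 'I_m -> 'cV[R]_n) :
  Hbar R n ei ej *m stack y = stack (fun l => y (ei l) - y (ej l)).
Proof.
rewrite tensmx_mul_stack; congr stack; apply/funext => l.
under eq_bigr do rewrite mul1mx incidenceE scalerBl.
by rewrite sumrB !sum_eq_scale.
Qed.

Lemma Hbar_tr_mul_stack (w : 'I_mbar -> 'cV[R]_n) :
  (Hbar R n ei ej)^T *m stack w = stack (fun i => \sum_l H l i *: w l).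
Proof.
rewrite trmx_tens trmx1 tensmx_mul_stack; congr stack; apply/funext => i.
by apply: eq_bigr => l _; rewrite mul1mx mxE.
Qed.

End Incidence.

Section Flow.
Variables (R : realType) (m mbar n : nat) (ei ej : 'I_mbar -> 'I_m).
Variables (d : 'I_mbar -> nat) (A : forall l, 'M[R]_(d l, n)) (b : forall l, 'cV[R]_(d l)).
Hypothesis no_loop : forall l, ei l != ej l.
Hypothesis edge_uniq : forall l l', ((ei l == ei l') && (ej l == ej l')) ||
                                   ((ei l == ej l') && (ej l == ei l')) -> l = l'.
Local Notation P := (Pe A).
Local Notation bbar := (bbare A b).
Local Notation joins l i j := (((ei l == i) && (ej l == j)) || ((ei l == j) && (ej l == i))).

Lemma sum_joins (V : zmodType) l i (F : 'I_m -> 'I_m -> V) :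
  \sum_(j | joins l i j) F i j =
  F (ei l) (ej l) *+ (ei l == i) + F (ej l) (ei l) *+ (ej l == i).
Proof.
have [<-|_] := eqVneq (ei l) i.
  rewrite eq_sym (negbTE (no_loop l)) addr0.
  by apply: big_pred1 => j; rewrite andbF orbF eq_sym.
have [<-|_] := eqVneq (ej l) i.
  by rewrite add0r; apply: big_pred1 => j; rewrite /= andbT eq_sym.
by rewrite !mulr0n addr0; apply: big_pred0 => j; rewrite andbF.
Qed.

Lemma bbarijC i j : bbarij ei ej A b j i = - bbarij ei ej A b i j.
Proof. by rewrite /bbarij opprB. Qed.

Lemma bbarij_edge l : bbarij ei ej A b (ei l) (ej l) = bbar l.
Proof.
rewrite /bbarij (big_pred1 l) ?big_pred0 ?subr0 // => l'.
  apply/negbTE/andP => -[/eqP ei_l' /eqP ej_l'].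
  have l'l : l' = l by apply: edge_uniq; rewrite ei_l' ej_l' !eqxx orbT.
  by move: (no_loop l); rewrite -{1}l'l ei_l' eqxx.
apply/andP/eqP => [[/eqP ei_l' /eqP ej_l']|->]; last by rewrite !eqxx.
by apply: edge_uniq; rewrite ei_l' ej_l' !eqxx.
Qed.

Lemma flow_incidence x i : flow ei ej A b x i =
  - \sum_l incidence R ei ej l i *: (P l *m (x (ei l) - x (ej l) - bbar l)).
Proof.
rewrite /flow; congr -%R.
transitivity (\sum_j \sum_(l | joins l i j) P l *m (x i - x j - bbarij ei ej A b i j)).
  rewrite [RHS](bigID (adj ei ej i)) /= [X in _ = _ + X]big1 ?addr0.
    by apply: eq_bigr => j _; rewrite /Pij mulmx_suml.
  by move=> j /existsPn not_adj; rewrite big_pred0 // => l; apply/negbTE/not_adj.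
rewrite (exchange_big_dep xpredT) //=; apply: eq_bigr => l _.
rewrite (sum_joins l i (fun i j => P l *m (x i - x j - bbarij ei ej A b i j))) /=.
rewrite (bbarijC (ei l)) bbarij_edge incidenceE scalerBl !scaler_nat.
have -> : x (ej l) - x (ei l) - - bbar l = - (x (ei l) - x (ej l) - bbar l).
  by rewrite [RHS]opprD opprB.
by rewrite mulmxN mulNrn.
Qed.

Hypothesis A_free : forall l, row_free (A l).
Local Notation G := (Pbar A *m Hbar R n ei ej).

Lemma gram_mul_stack (y : 'I_m -> 'cV[R]_n) :
  G^T *m G *m stack y =
  stack (fun i => \sum_l incidence R ei ej l i *: (P l *m (y (ei l) - y (ej l)))).
Proof.
rewrite trmx_mul Pbar_tr -!mulmxA Hbar_mul_stack !Pbar_mul_stack Hbar_tr_mul_stack.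
by congr stack; apply/funext => i; under eq_bigr do rewrite mulmxA (Pe_idem A_free).
Qed.

Lemma flow_stack (x0 : 'I_m -> 'cV[R]_n) :
  (forall l, A l *m (x0 (ei l) - x0 (ej l)) = b l) ->
  forall x, stack (flow ei ej A b x) = - (G^T *m G *m (stack x - stack x0)).
Proof.
move=> x0_agree x; rewrite -stackB gram_mul_stack -stackN; congr stack.
apply/funext => i; rewrite flow_incidence; congr -%R; apply: eq_bigr => l _.
rewrite -(Pe_agreement (x0_agree l)) mulmxBr mulmxA (Pe_idem A_free) -mulmxBr.
by rewrite !opprD !opprK addrACA.
Qed.

Lemma agreement_of_kernel (y : 'I_m -> 'cV[R]_n) :
  G *m stack y = 0 -> forall l, A l *m (y (ei l) - y (ej l)) = 0.
Proof.
move=> Gy l; rewrite -(mulmx_Pe A_free) -mulmxA.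
have := congr1 (fun v => unstack v l) Gy.
rewrite /= -mulmxA Hbar_mul_stack Pbar_mul_stack stackK => ->.
have -> : unstack 0 l = 0 :> 'cV[R]_n by apply/colP => k; rewrite !mxE.
exact: mulmx0.
Qed.

End Flow.

Theorem corollary1 (R : realType) (m mbar n : nat) (ei ej : 'I_mbar -> 'I_m)
  (d : 'I_mbar -> nat) (A : forall l, 'M[R]_(d l, n)) (b : forall l, 'cV[R]_(d l)) :
  simple_edges ei ej ->
  connected_graph ei ej ->
  (forall l, row_free (A l)) ->
  (exists x0 : 'I_m -> 'cV[R]_n,
      forall l, A l *m (x0 (ei l) - x0 (ej l)) = b l) ->
  (forall y : 'cV[R]_(mbar * n),
      (Hbar R n ei ej)^T *m y = 0 ->
      (exists z, y = Pbar A *m z) -> y = 0) ->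
  forall x : R -> 'I_m -> 'cV[R]_n,
  (forall i k, {within (`[0%R, +oo[ : set R), continuous (fun s : R => x s i k ord0)}) ->
  (forall t : R, 0 < t -> forall i k,
      is_derive t 1 (fun s => x s i k ord0) (flow ei ej A b (x t) i k ord0)) ->
  exists xs : 'I_m -> 'cV[R]_n,
    (exists c lam : R, 0 < lam /\
       forall t : R, 0 <= t -> forall i k,
         `|x t i k ord0 - xs i k ord0| <= c * expR (- (lam * t))) /\
    (forall l, A l *m (xs (ei l) - xs (ej l)) = b l).
Proof.
move=> [no_loop edge_uniq] _ A_free [x0 x0_agree] _ x x_cont x_derive.
pose G := Pbar A *m Hbar R n ei ej.
have z_derive t : 0 < t -> coord_derive t (fun s => stack (x s) - stack x0)
                                 (- (G^T *m G *m (stack (x t) - stack x0))).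
  by move=> /x_derive /coord_derive_stack; rewrite (flow_stack no_loop edge_uniq A_free x0_agree).
have [u [c [lam [lam_gt0 z_cvg]]] Gu] :=
  gradient_flow_cvg (coord_continuous_stack (c := stack x0) x_cont) z_derive.
exists (fun i => x0 i + unstack u i); split.
  exists c, lam; split=> // t t_ge0 i k; have := z_cvg t t_ge0 (mxtens_index (i, k)).
  by rewrite !mxE mxtens_indexK opprD addrA.
move=> l; rewrite opprD addrACA mulmxDr x0_agree.
by rewrite (agreement_of_kernel A_free) ?unstackK ?addr0.
Qed.
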